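(* Let $n,d$ be positive integers and $\underline q=(q_1,\ldots,q_n)\in(\Bbbk^* )^n$ with $q_i^d\neq1$ for all $i$. If at least one coordinate $q_i$ is a root of unity, then $A(n,d,\underline q)$ admits a $\Bbbk$-algebra endomorphism that is not invertible.
   Context: Let $\Bbbk$ be a field. $A(n,d,\underline{q})$ is the $\Bbbk$-algebra generated by $x_i,y_i,h_i,h_i^{-1}$ ($1\le i\le n$) subject to $h_ih_i^{-1}=h_i^{-1}h_i=1$, $x_ih_i=q_ih_ix_i$, $y_ih_i=q_i^{-1}h_iy_i$, $x_iy_i=(q_ih_i)^d-1$, $y_ix_i=h_i^d-1$, and, for $i\neq j$, each of $h_i^{\pm1},x_i,y_i$ commutes with each of $h_j^{\pm1},x_j,y_j$. *)

From HB Require Import structures.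
From mathcomp Require Import all_boot all_order all_algebra.
Set Implicit Arguments. Unset Strict Implicit. Unset Printing Implicit Defensive.
Import GRing.Theory.
Local Open Scope ring_scope.

Definition alg_hom (F : fieldType) (A B : algType F) (f : A -> B) : Prop :=
  [/\ forall a b : A, f (a + b) = f a + f b,
      forall (c : F) (a : A), f (c *: a) = c *: f a,
      forall a b : A, f (a * b) = f a * f b &
      f 1 = 1].

Definition A_rels (F : fieldType) (n d : nat) (q : 'I_n -> F) (B : algType F)
    (x y h hi : 'I_n -> B) : Prop :=
  (forall i : 'I_n,
     [/\ h i * hi i = 1 /\ hi i * h i = 1,
         x i * h i = q i *: (h i * x i),
         y i * h i = (q i)^-1 *: (h i * y i),
         x i * y i = (q i *: h i) ^+ d - 1 &
         y i * x i = h i ^+ d - 1]) /\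
  (forall i j : 'I_n, i != j ->
     forall u v : B, u \in [:: h i; hi i; x i; y i] ->
                     v \in [:: h j; hi j; x j; y j] -> u * v = v * u).

Definition is_A_presentation (F : fieldType) (n d : nat) (q : 'I_n -> F)
    (A : algType F) (x y h hi : 'I_n -> A) : Prop :=
  A_rels d q x y h hi /\
  forall (B : algType F) (xB yB hB hiB : 'I_n -> B),
    A_rels d q xB yB hB hiB ->
    exists f : A -> B,
      [/\ alg_hom f,
          (forall i, [/\ f (x i) = xB i, f (y i) = yB i,
                         f (h i) = hB i & f (hi i) = hiB i]) &
          forall g : A -> B, alg_hom g ->
            (forall i, [/\ g (x i) = xB i, g (y i) = yB i,
                           g (h i) = hB i & g (hi i) = hiB i]) ->
            forall a, g a = f a].

From HB Require Import structures.
From mathcomp Require Import all_boot all_order all_algebra.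
From mathcomp Require Import boolp ring.
Set Implicit Arguments. Unset Strict Implicit. Unset Printing Implicit Defensive.
Import GRing.Theory.
Local Open Scope ring_scope.

(* Some power of q i0 is 1, so q i0 ^ L = q i0 for some L > 1.  With e i0 = L and
   e i = 1 otherwise, x i |-> x i, h i |-> h i ^ e i,
   y i |-> y i * sum_(j < e i) (q i h i) ^ (d j) respects the defining relations
   (the geometric sum turns (q i h i) ^ d - 1 into (q i h i) ^ (d e i) - 1), so it
   extends to an endomorphism f.  Let A act on F-valued functions on (Z^2)^n, where
   x i and h i act on the i-th coordinate (a, b) by weighted shifts of a and of b.
   The operator multiplying by 1 or by q i0 according as L divides b_i0 or not
   commutes with the images of all f(generator), hence with the image of f(A), but
   not with the image of h i0 (as q i0 <> 1).  So h i0 is not in the image of f. *)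

Section SiteEndomorphisms.
Variables (F : fieldType) (n : nat).

Definition site := 'I_n -> (int * int)%type.
Definition sfun := site -> F.

Definition sfun_add (u w : sfun) : sfun := fun z => u z + w z.
Definition sfun_scale (c : F) (u : sfun) : sfun := fun z => c * u z.

Definition linear_sfun (f : sfun -> sfun) :=
  (forall u w, f (sfun_add u w) = sfun_add (f u) (f w)) /\
  (forall c u, f (sfun_scale c u) = sfun_scale c (f u)).

Record endo := Endo { endo_fun :> sfun -> sfun; endo_linear : linear_sfun endo_fun }.

Lemma endoP (f g : endo) : (forall v z, f v z = g v z) -> f = g.
Proof.
case: f g => f fP [g gP] /= fg.
have {fg} fg : f = g.
  by do 2!apply: functional_extensionality_dep => ?; apply: fg.
by subst g; congr Endo; apply: Prop_irrelevance.
Qed.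

HB.instance Definition _ := gen_eqMixin endo.
HB.instance Definition _ := gen_choiceMixin endo.

Lemma linear_sfun_add (f g : endo) : linear_sfun (fun v => sfun_add (f v) (g v)).
Proof.
case: f g => f [fD fZ] [g [gD gZ]]; split=> [u w|c u] /=; rewrite ?fD ?gD ?fZ ?gZ;
  by apply: functional_extensionality_dep => z; rewrite /sfun_add /sfun_scale; ring.
Qed.

Lemma linear_sfun_scale c (f : endo) : linear_sfun (fun v => sfun_scale c (f v)).
Proof.
case: f => f [fD fZ]; split=> [u w|a u] /=; rewrite ?fD ?fZ;
  by apply: functional_extensionality_dep => z; rewrite /sfun_add /sfun_scale; ring.
Qed.

Lemma linear_sfun0 : linear_sfun (fun _ => fun _ => 0).
Proof.
by split=> *; apply: functional_extensionality_dep => z; rewrite /sfun_add /sfun_scale; ring.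
Qed.

Lemma linear_sfun_comp (f g : endo) : linear_sfun (fun v => f (g v)).
Proof.
by case: f g => f [fD fZ] [g [gD gZ]]; split=> [u w|c u] /=; rewrite ?gD ?fD ?gZ ?fZ.
Qed.

Lemma linear_sfun_id : linear_sfun id.
Proof. by []. Qed.

Definition endo_add f g := Endo (linear_sfun_add f g).
Definition endo_scale c f := Endo (linear_sfun_scale c f).
Definition endo_zero := Endo linear_sfun0.
Definition endo_mul f g := Endo (linear_sfun_comp f g).
Definition endo_one := Endo linear_sfun_id.

Lemma endo_addA : associative endo_add.
Proof. by move=> f g h; apply: endoP => v z /=; rewrite /sfun_add addrA. Qed.
Lemma endo_addC : commutative endo_add.
Proof. by move=> f g; apply: endoP => v z /=; rewrite /sfun_add addrC. Qed.
Lemma endo_add0 : left_id endo_zero endo_add.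
Proof. by move=> f; apply: endoP => v z /=; rewrite /sfun_add add0r. Qed.
Lemma endo_addN : left_inverse endo_zero (endo_scale (-1)) endo_add.
Proof. by move=> f; apply: endoP => v z /=; rewrite /sfun_add /sfun_scale mulN1r addNr. Qed.

HB.instance Definition _ := GRing.isZmodule.Build endo endo_addA endo_addC endo_add0 endo_addN.

Lemma endo_mulA : associative endo_mul. Proof. by move=> f g h; apply: endoP. Qed.
Lemma endo_mul1 : left_id endo_one endo_mul. Proof. by move=> f; apply: endoP. Qed.
Lemma endo_mulr1 : right_id endo_one endo_mul. Proof. by move=> f; apply: endoP. Qed.
Lemma endo_mulDl : left_distributive endo_mul +%R. Proof. by move=> f g h; apply: endoP. Qed.
Lemma endo_mulDr : right_distributive endo_mul +%R.
Proof. by move=> f g h; apply: endoP => v z; case: f => f [fD _] /=; rewrite fD. Qed.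
Lemma endo_one_neq0 : endo_one != 0.
Proof.
apply/eqP => /(congr1 (fun f : endo => f (fun _ => 1) (fun _ => (0, 0)%Z))) /eqP.
by rewrite oner_eq0.
Qed.

HB.instance Definition _ := GRing.Zmodule_isNzRing.Build endo
  endo_mulA endo_mul1 endo_mulr1 endo_mulDl endo_mulDr endo_one_neq0.

Lemma endo_scaleA a b f : endo_scale a (endo_scale b f) = endo_scale (a * b) f.
Proof. by apply: endoP => v z /=; rewrite /sfun_scale mulrA. Qed.
Lemma endo_scale1 : left_id 1 endo_scale.
Proof. by move=> f; apply: endoP => v z /=; rewrite /sfun_scale mul1r. Qed.
Lemma endo_scaleDr : right_distributive endo_scale +%R.
Proof. by move=> a f g; apply: endoP => v z /=; rewrite /sfun_scale /sfun_add mulrDr. Qed.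
Lemma endo_scaleDl f : {morph endo_scale^~ f : a b / a + b}.
Proof. by move=> a b; apply: endoP => v z /=; rewrite /sfun_scale /sfun_add mulrDl. Qed.

HB.instance Definition _ := GRing.Zmodule_isLmodule.Build F endo
  endo_scaleA endo_scale1 endo_scaleDr endo_scaleDl.

Lemma endo_scaleAl (a : F) (f g : endo) : a *: (f * g) = (a *: f) * g.
Proof. by apply: endoP. Qed.

HB.instance Definition _ := GRing.Lmodule_isLalgebra.Build F endo endo_scaleAl.

Lemma endo_scaleAr (a : F) (f g : endo) : a *: (f * g) = f * (a *: g).
Proof. by apply: endoP => v z; case: f => f [_ fZ] /=; rewrite fZ. Qed.

HB.instance Definition _ := GRing.Lalgebra_isAlgebra.Build F endo endo_scaleAr.

Lemma endoM (f g : endo) v : (f * g) v = f (g v).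
Proof. by []. Qed.

End SiteEndomorphisms.

Section WeightedShifts.
Variables (F : fieldType) (n : nat).
Local Notation endo := (endo F n).
Local Notation site := (site n).

Definition site_set (z : site) (i : 'I_n) (w : int * int) : site :=
  fun j => if j == i then w else z j.

Lemma site_set_same z i w : site_set z i w i = w.
Proof. by rewrite /site_set eqxx. Qed.

Lemma site_set_other z i j w : j != i -> site_set z i w j = z j.
Proof. by rewrite /site_set => /negbTE ->. Qed.

Lemma site_set_set z i w w' : site_set (site_set z i w) i w' = site_set z i w'.
Proof. by apply: functional_extensionality_dep => j; rewrite /site_set; case: eqP. Qed.

Lemma site_set_id z i : site_set z i (z i) = z.
Proof. by apply: functional_extensionality_dep => j; rewrite /site_set; case: eqP => [->|]. Qed.

Lemma site_setC z i j w w' : i != j ->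
  site_set (site_set z i w) j w' = site_set (site_set z j w') i w.
Proof.
move=> ij; apply: functional_extensionality_dep => k; rewrite /site_set.
by case: (eqVneq k j) => [->|//]; rewrite eq_sym (negbTE ij).
Qed.

Lemma linear_wshift i (a : int * int -> F) (s : int * int -> int * int) :
  linear_sfun (fun (v : sfun F n) z => a (z i) * v (site_set z i (s (z i)))).
Proof.
by split=> *; apply: functional_extensionality_dep => z; rewrite /sfun_add /sfun_scale; ring.
Qed.

Definition wshift i a s : endo := Endo (linear_wshift i a s).

Lemma wshiftE i a s v z : wshift i a s v z = a (z i) * v (site_set z i (s (z i))).
Proof. by []. Qed.

Lemma wshiftM i a s b t :
  wshift i a s * wshift i b t = wshift i (fun w => a w * b (s w)) (fun w => t (s w)).
Proof.
by apply: endoP => v z; rewrite [LHS]wshiftE wshiftE site_set_same site_set_set mulrA.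
Qed.

Lemma wshift_ext i a s b t : a =1 b -> s =1 t -> wshift i a s = wshift i b t.
Proof. by move=> ab st; apply: endoP => v z; rewrite !wshiftE ab st. Qed.

Lemma wshiftZ i c a s : c *: wshift i a s = wshift i (fun w => c * a w) s.
Proof. by apply: endoP => v z; rewrite /= /sfun_scale mulrA. Qed.

Lemma wshift1 i : wshift i (fun _ => 1) id = 1.
Proof. by apply: endoP => v z; rewrite wshiftE mul1r site_set_id. Qed.

Lemma wshiftC i j a s b t : i != j -> GRing.comm (wshift i a s) (wshift j b t).
Proof.
move=> ij; have ji : j != i by rewrite eq_sym.
apply: endoP => v z; rewrite !endoM !wshiftE !site_set_other //.
by rewrite mulrCA site_setC.
Qed.

End WeightedShifts.

Section ShiftRepresentation.
Variables (F : fieldType) (n d : nat) (q : 'I_n -> F).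
Hypothesis q_neq0 : forall i, q i != 0.
Local Notation endo := (endo F n).

Definition rep_h i : endo := wshift i (fun w => q i ^ w.1) (fun w => (w.1, w.2 - 1)).
Definition rep_hi i : endo := wshift i (fun w => q i ^ (- w.1)) (fun w => (w.1, w.2 + 1)).
Definition rep_x i : endo := wshift i (fun _ => 1) (fun w => (w.1 + 1, w.2)).
Definition rep_xi i : endo := wshift i (fun _ => 1) (fun w => (w.1 - 1, w.2)).
Definition rep_y i : endo :=
  wshift i (fun w => (q i ^ w.1) ^+ d) (fun w => (w.1 - 1, w.2 - d%:Z)) - rep_xi i.

Lemma rep_hX i k :
  rep_h i ^+ k = wshift i (fun w => (q i ^ w.1) ^+ k) (fun w => (w.1, w.2 - k%:Z)).
Proof.
elim: k => [|k IH].
  by rewrite expr0 -(wshift1 _ i); apply: wshift_ext => [w|[a b]] /=; rewrite ?expr0 ?subr0.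
rewrite exprS IH wshiftM; apply: wshift_ext => w /=; first by rewrite exprS.
by rewrite -addrA -opprD -add1n PoszD.
Qed.

Lemma rep_xiK i : rep_xi i * rep_x i = 1.
Proof. by rewrite wshiftM -(wshift1 _ i); apply: wshift_ext => [w|[a b]] /=; rewrite ?mulr1 ?subrK. Qed.

Lemma expq_subr1 i a : q i ^ (a - 1) = (q i)^-1 * q i ^ a.
Proof. by rewrite expfzDr // -invr_expz expr1z mulrC. Qed.

Lemma rep_rel i :
  [/\ rep_h i * rep_hi i = 1 /\ rep_hi i * rep_h i = 1,
      rep_x i * rep_h i = q i *: (rep_h i * rep_x i),
      rep_y i * rep_h i = (q i)^-1 *: (rep_h i * rep_y i),
      rep_x i * rep_y i = (q i *: rep_h i) ^+ d - 1 &
      rep_y i * rep_x i = rep_h i ^+ d - 1].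
Proof.
rewrite /rep_y; split.
- by split; rewrite wshiftM -(wshift1 _ i); apply: wshift_ext => -[a b] /=;
    rewrite -?expfzDr ?addrN ?addNr ?expr0z ?subrK ?addrK.
- rewrite !wshiftM wshiftZ; apply: wshift_ext => -[a b] //=.
  by rewrite mul1r mulr1 expfzDr // expr1z mulrC.
- rewrite mulrBl mulrBr scalerBr !wshiftM !wshiftZ.
  by congr (_ - _); apply: wshift_ext => -[a b] /=; rewrite ?expq_subr1 //;
    [ring | rewrite addrAC | ring].
- rewrite mulrBr exprZn rep_hX !wshiftM wshiftZ -(wshift1 _ i).
  by congr (_ - _); apply: wshift_ext => -[a b] /=;
    rewrite ?addrK ?mulr1 // mul1r expfzDr // expr1z exprMn mulrC.
- rewrite mulrBl rep_hX rep_xiK !wshiftM -(wshift1 _ i).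
  by congr (_ - _); apply: wshift_ext => -[a b] /=; rewrite ?subrK ?mulr1.
Qed.

Lemma wshift_comm_rep i j a s u : j != i ->
  u \in [:: rep_h i; rep_hi i; rep_x i; rep_y i] -> GRing.comm (wshift j a s) u.
Proof.
by move=> ji; rewrite !inE => /or4P [] /eqP ->; rewrite ?/rep_y; try apply: commrB;
  apply: wshiftC.
Qed.

Lemma rep_rels : A_rels d q rep_x rep_y rep_h rep_hi.
Proof.
split=> [|i j ij u v ui]; first exact: rep_rel.
have comm_u k a s : i != k -> GRing.comm u (wshift k a s).
  by move=> ik; apply/commr_sym/(wshift_comm_rep _ _ _ ui); rewrite eq_sym.
by rewrite !inE => /or4P [] /eqP ->; rewrite ?/rep_y; try apply: commrB; apply: comm_u.
Qed.

End ShiftRepresentation.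

Section Twist.
Variables (F : fieldType) (n : nat) (q : 'I_n -> F).
Hypothesis q_neq0 : forall i, q i != 0.
Variables (i0 : 'I_n) (L : nat).
Hypothesis L_gt1 : (1 < L)%N.
Hypothesis q_neq1 : q i0 != 1.
Local Notation endo := (endo F n).

Definition twist_coef (b : int) : F := if (b %% L%:Z)%Z == 0 then 1 else q i0.
Definition twist : endo := wshift i0 (fun w => twist_coef w.2) id.
Definition twist_inv : endo := wshift i0 (fun w => (twist_coef w.2)^-1) id.

Lemma twist_coef_neq0 b : twist_coef b != 0.
Proof. by rewrite /twist_coef; case: ifP => _; rewrite ?oner_neq0 ?q_neq0. Qed.

Lemma twistK : twist * twist_inv = 1.
Proof.
by rewrite wshiftM -(wshift1 _ i0); apply: wshift_ext => // w; rewrite mulfV ?twist_coef_neq0.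
Qed.

Lemma twist_invK : twist_inv * twist = 1.
Proof.
by rewrite wshiftM -(wshift1 _ i0); apply: wshift_ext => // w; rewrite mulVf ?twist_coef_neq0.
Qed.

Lemma twist_comm_other j a s : j != i0 -> GRing.comm twist (wshift j a s).
Proof. by move=> ji0; apply: wshiftC; rewrite eq_sym. Qed.

Lemma twist_comm_shift a s :
  (forall w, ((s w).2 %% L%:Z)%Z = (w.2 %% L%:Z)%Z) -> GRing.comm twist (wshift i0 a s).
Proof.
by move=> sL; rewrite /GRing.comm !wshiftM; apply: wshift_ext => // w; rewrite /twist_coef sL mulrC.
Qed.

Lemma twist_comm_x i : GRing.comm twist (rep_x F i).
Proof.
by case: (eqVneq i i0) => [->|]; [apply: twist_comm_shift | apply: twist_comm_other].
Qed.

Lemma twist_comm_xi i : GRing.comm twist (rep_xi F i).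
Proof.
by case: (eqVneq i i0) => [->|]; [apply: twist_comm_shift | apply: twist_comm_other].
Qed.

Lemma twist_comm_hX i k : (i != i0) || (L %| k)%N -> GRing.comm twist (rep_h q i ^+ k).
Proof.
rewrite rep_hX; case: (eqVneq i i0) => [-> /dvdnP[c ->]|ii0 _]; last exact: twist_comm_other.
by apply: twist_comm_shift => -[a b] /=; rewrite PoszM addrC -mulNr modzMDl.
Qed.

Lemma twist_not_comm_h : ~ GRing.comm twist (rep_h q i0).
Proof.
pose z : site n := site_set (fun _ => (0, 0)%Z) i0 (0, 1)%Z.
pose v : sfun F n := fun z => if z i0 == (0, 0)%Z then 1 else 0.
(* At z, applied to the indicator v of the origin, the two sides give q i0 and 1. *)
move/(congr1 (fun f : endo => f v z)); rewrite endoM !wshiftE /v /z /= !site_set_same /=.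
rewrite subrr expr0z !mul1r !mulr1 /twist_coef mod0z modz_small ?ltz_nat //=.
exact/eqP.
Qed.

End Twist.

Lemma commrZ (F : fieldType) (A : algType F) (a b : A) (c : F) :
  GRing.comm a b -> GRing.comm a (c *: b).
Proof. by rewrite /GRing.comm -scalerAr -scalerAl => ->. Qed.

Lemma skew_commrX (F : fieldType) (A : algType F) (a b : A) (c : F) :
  a * b = c *: (b * a) -> forall k, a * b ^+ k = c ^+ k *: (b ^+ k * a).
Proof.
move=> ab; elim=> [|k IH]; first by rewrite !expr0 mulr1 mul1r scale1r.
by rewrite exprSr mulrA IH -scalerAl -!mulrA ab -scalerAr scalerA -exprSr.
Qed.

Section PowerFamily.
Variables (F : fieldType) (n d : nat) (q : 'I_n -> F) (A : algType F).
Variables (x y h hi : 'I_n -> A).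
Hypothesis rels : A_rels d q x y h hi.
Variable e : 'I_n -> nat.
Hypothesis q_exp : forall i, q i ^+ e i = q i.

Definition geom_h i := \sum_(j < e i) ((q i *: h i) ^+ d) ^+ j.
Definition pow_y i := y i * geom_h i.

Lemma comm_h_geom i : GRing.comm (h i) (geom_h i).
Proof. by apply: commr_sum => j _; do 2!apply: commrX; apply/commrZ/commr_refl. Qed.

Lemma geom_h_x i : geom_h i * x i = x i * \sum_(j < e i) (h i ^+ d) ^+ j.
Proof.
have [_ xh _ _ _] := rels.1 i.
rewrite mulr_suml mulr_sumr; apply: eq_bigr => j _.
by rewrite !exprZn -!exprM -scalerAl -(skew_commrX xh) exprM.
Qed.

Lemma pow_rel i :
  [/\ h i ^+ e i * hi i ^+ e i = 1 /\ hi i ^+ e i * h i ^+ e i = 1,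
      x i * h i ^+ e i = q i *: (h i ^+ e i * x i),
      pow_y i * h i ^+ e i = (q i)^-1 *: (h i ^+ e i * pow_y i),
      x i * pow_y i = (q i *: h i ^+ e i) ^+ d - 1 &
      pow_y i * x i = (h i ^+ e i) ^+ d - 1].
Proof.
have [[hhi hih] xh yh xy yx] := rels.1 i.
have c_h_hi : GRing.comm (h i) (hi i) by rewrite /GRing.comm hhi hih.
rewrite /pow_y; split.
- by split; rewrite -exprMn_comm ?hhi ?hih ?expr1n.
- by rewrite (skew_commrX xh) q_exp.
- have c_geom : GRing.comm (geom_h i) (h i ^+ e i) by apply/commrX/commr_sym/comm_h_geom.
  by rewrite -mulrA c_geom (mulrA (y i)) (skew_commrX yh) exprVn q_exp -scalerAl mulrA.
- rewrite mulrA xy -subrX1 (exprZn (q i) (h i)) (exprZn (q i ^+ d)) (exprZn (q i) (h i ^+ e i)).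
  by rewrite -!exprM (mulnC d) [q i ^+ (e i * d)]exprM q_exp.
- by rewrite -mulrA geom_h_x mulrA yx -subrX1 exprAC.
Qed.

Lemma comm_pow_gen j (w : A) :
  GRing.comm w (h j) -> GRing.comm w (hi j) -> GRing.comm w (x j) -> GRing.comm w (y j) ->
  forall u, u \in [:: h j ^+ e j; hi j ^+ e j; x j; pow_y j] -> GRing.comm w u.
Proof.
move=> ch chi cx cy u; rewrite !inE => /or4P [] /eqP -> //; try exact: commrX.
apply: commrM => //; apply: commr_sum => k _; do 2!apply: commrX; exact: commrZ.
Qed.

Lemma pow_rels :
  A_rels d q x pow_y (fun i => h i ^+ e i) (fun i => hi i ^+ e i).
Proof.
split=> [|i j ij u v ui vj]; first exact: pow_rel.
have gen_i g : g \in [:: h i; hi i; x i; y i] -> GRing.comm g v.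
  by move=> gi; apply: comm_pow_gen vj; apply: (rels.2 i j ij) => //; rewrite !inE eqxx ?orbT.
apply/commr_sym; apply: comm_pow_gen ui; apply/commr_sym/gen_i; by rewrite !inE eqxx ?orbT.
Qed.

End PowerFamily.

Section AlgebraHomomorphisms.
Variables (F : fieldType) (A B C : algType F).

Lemma alg_homB (f : A -> B) : alg_hom f -> forall a b, f (a - b) = f a - f b.
Proof. by case=> fD fZ _ _ a b; rewrite fD -scaleN1r fZ scaleN1r. Qed.

Lemma alg_homXn (f : A -> B) : alg_hom f -> forall a k, f (a ^+ k) = f a ^+ k.
Proof.
case=> _ _ fM f1 a; elim=> [|k IH]; first by rewrite !expr0.
by rewrite !exprS fM IH.
Qed.

Lemma alg_hom_comp (f : A -> B) (g : B -> C) :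
  alg_hom f -> alg_hom g -> alg_hom (fun a => g (f a)).
Proof.
case=> fD fZ fM f1 [gD gZ gM g1]; split=> [a b|c a|a b|].
- by rewrite fD gD.
- by rewrite fZ gZ.
- by rewrite fM gM.
- by rewrite f1 g1.
Qed.

Lemma alg_hom_conj (f : A -> B) (u ui : B) :
  alg_hom f -> u * ui = 1 -> ui * u = 1 -> alg_hom (fun a => u * f a * ui).
Proof.
case=> fD fZ fM f1 uK uiK; split=> [a b|c a|a b|].
- by rewrite fD mulrDr mulrDl.
- by rewrite fZ -scalerAr -scalerAl.
- by rewrite fM -!mulrA (mulrA ui) uiK mul1r.
- by rewrite f1 mulr1 uK.
Qed.

Lemma alg_hom_rels (n d : nat) (q : 'I_n -> F) (f : A -> B) (x y h hi : 'I_n -> A) :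
  alg_hom f -> A_rels d q x y h hi ->
  A_rels d q (fun i => f (x i)) (fun i => f (y i)) (fun i => f (h i)) (fun i => f (hi i)).
Proof.
move=> f_hom [rel comm]; have fB := alg_homB f_hom; have fX := alg_homXn f_hom.
case: f_hom => fD fZ fM f1; split=> [i|i j ij u v].
  have [[hhi hih] xh yh xy yx] := rel i.
  by split; first split; rewrite -?fM ?hhi ?hih ?xh ?yh ?xy ?yx ?fB ?fX ?fZ ?f1.
by rewrite !inE => /or4P [] /eqP -> /or4P [] /eqP ->;
  rewrite -!fM (comm i j ij) // !inE eqxx ?orbT.
Qed.

End AlgebraHomomorphisms.

Section Presentation.
Variables (F : fieldType) (n d : nat) (q : 'I_n -> F) (A : algType F).
Variables (x y h hi : 'I_n -> A).
Hypothesis pres : is_A_presentation d q x y h hi.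

Lemma presentation_hom_unique (B : algType F) (f g : A -> B) :
  alg_hom f -> alg_hom g ->
  (forall i, [/\ f (x i) = g (x i), f (y i) = g (y i), f (h i) = g (h i) & f (hi i) = g (hi i)]) ->
  f =1 g.
Proof.
move=> f_hom g_hom fg a; have [rels univ] := pres.
have [k [_ _ k_uniq]] := univ B _ _ _ _ (alg_hom_rels g_hom rels).
by rewrite (k_uniq f) ?(k_uniq g).
Qed.

(* Conjugation by u fixes the images of the generators, so it fixes the whole image. *)
Lemma presentation_comm_image (B : algType F) (f : A -> B) (u ui : B) :
  alg_hom f -> u * ui = 1 -> ui * u = 1 ->
  (forall i, [/\ GRing.comm u (f (x i)), GRing.comm u (f (y i)),
                 GRing.comm u (f (h i)) & GRing.comm u (f (hi i))]) ->
  forall a, GRing.comm u (f a).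
Proof.
move=> f_hom uK uiK comm_gen a.
have conj_gen b : GRing.comm u b -> u * b * ui = b.
  by rewrite /GRing.comm => ->; rewrite -mulrA uK mulr1.
have conj_a : u * f a * ui = f a.
  apply: (presentation_hom_unique (alg_hom_conj f_hom uK uiK) f_hom) => i.
  by have [cx cy ch chi] := comm_gen i; rewrite !conj_gen.
by rewrite /GRing.comm -{2}conj_a -!mulrA uiK mulr1.
Qed.

End Presentation.

Lemma commr_inv (R : pzRingType) (a b c : R) :
  GRing.comm a b -> b * c = 1 -> c * b = 1 -> GRing.comm a c.
Proof.
rewrite /GRing.comm => ab bc cb.
by rewrite -[a * c]mul1r -cb -mulrA (mulrA b) -ab -!mulrA bc mulr1.
Qed.

(* u commutes with y i = xi i * (x i * y i) = xi i * ((q i *: h i) ^+ d - 1). *)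
Lemma comm_rels (F : fieldType) (n d : nat) (q : 'I_n -> F) (B : algType F)
    (x y h hi xi : 'I_n -> B) (u : B) :
  A_rels d q x y h hi -> (forall i, xi i * x i = 1) ->
  (forall i, [/\ GRing.comm u (x i), GRing.comm u (xi i) & GRing.comm u (h i)]) ->
  forall i, [/\ GRing.comm u (x i), GRing.comm u (y i), GRing.comm u (h i) & GRing.comm u (hi i)].
Proof.
move=> [rels _] xiK comm_gen i; have [cx cxi ch] := comm_gen i.
have [[hhi hih] _ _ xy _] := rels i.
split=> //; last exact: commr_inv hhi hih.
have -> : y i = xi i * ((q i *: h i) ^+ d - 1) by rewrite -xy mulrA xiK mul1r.
by apply: commrM => //; apply: commrB; [apply/commrX/commrZ | apply: commr1].
Qed.

Theorem corollary4p4 (F : fieldType) (n d : nat) (q : 'I_n -> F)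
    (A : algType F) (x y h hi : 'I_n -> A) :
  (0 < n)%N -> (0 < d)%N ->
  (forall i, q i != 0) ->
  (forall i, q i ^+ d != 1) ->
  (exists i, exists m : nat, (0 < m)%N /\ q i ^+ m = 1) ->
  is_A_presentation d q x y h hi ->
  exists f : A -> A, alg_hom f /\ ~ bijective f.
Proof.
move=> _ _ q_neq0 qd_neq1 [i0 [m [m_gt0 qm]]] pres; have [rels univ] := pres.
have q_neq1 : q i0 != 1 by apply: contraNneq (qd_neq1 i0) => ->; rewrite expr1n.
pose e i := if i == i0 then m.+1 else 1%N.
have q_exp i : q i ^+ e i = q i.
  by rewrite /e; case: eqP => [->|_]; rewrite ?exprSr ?qm ?mul1r ?expr1.
have [f [f_hom f_gen _]] := univ A _ _ _ _ (pow_rels rels q_exp).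
exists f; split=> // -[f_inv _ f_invK].
have [g [g_hom g_gen _]] := univ _ _ _ _ _ (rep_rels d q_neq0).
have gf_hom := alg_hom_comp f_hom g_hom.
have gf_gen i : g (f (x i)) = rep_x F i /\ g (f (h i)) = rep_h q i ^+ e i.
  have [-> _ -> _] := f_gen i; rewrite (alg_homXn g_hom).
  by have [-> _ -> _] := g_gen i.
have L_gt1 : (1 < m.+1)%N := m_gt0.
apply: (twist_not_comm_h L_gt1 q_neq1).
have [_ _ <- _] := g_gen i0; rewrite -[h i0]f_invK.
apply: (presentation_comm_image pres gf_hom (twistK q_neq0 i0 m.+1) (twist_invK q_neq0 i0 m.+1)).
move: (alg_hom_rels gf_hom rels) => /= gf_rels.
apply: (comm_rels gf_rels (xi := @rep_xi F n)) => /= i.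
  by have [-> _] := gf_gen i; apply: rep_xiK.
have [-> ->] := gf_gen i; split; [exact: twist_comm_x | exact: twist_comm_xi |].
by apply: twist_comm_hX; rewrite /e; case: eqVneq; rewrite ?dvdnn.
Qed.
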